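(* Let $r\ge1$, $n$ be integers and let $\sigma,\sigma':\mathbb{Z}_n\to\{0,1\}$ be a temporally periodic pair, with block-length vectors $\vec v$ and $\vec v'$ respectively. Then $|\vec v|=|\vec v'|$, i.e. $|B(\sigma)|=|B(\sigma')|$.
   Context: Cells are elements of $\mathbb{Z}_n$, arithmetic mod $n$; $[a,b]$ denotes the cyclic interval $a,\dots,b$. The majority rule with radius $r$: $\mathrm{maj}_r(\sigma)(i)=0$ if among the cells of $[i-r,i+r]$ strictly more have value $0$ than $1$ under $\sigma$, and $=1$ otherwise. A temporally periodic pair is a pair with $\mathrm{maj}_r(\sigma)=\sigma'$ and $\mathrm{maj}_r(\sigma')=\sigma$. For $\beta\in\{0,1\}$, $B^\beta(\sigma)$ is the set of cell intervals $[i,j]$ with $\sigma(k)=\beta$ for all $k\in[i,j]$ and $\sigma(i-1)=\sigma(j+1)=1-\beta$; $B(\sigma)=B^0(\sigma)\cup B^1(\sigma)$. The block-length vector of $\sigma$ is the cyclic sequence of lengths of the blocks in $B(\sigma)$ listed in their cyclic order; its length $|\vec v|$ is the number of entries, $|B(\sigma)|$. *)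

From mathcomp Require Import all_boot all_order all_algebra.
Set Implicit Arguments. Unset Strict Implicit. Unset Printing Implicit Defensive.
Import Order.TTheory GRing.Theory Num.Theory.
Local Open Scope ring_scope.

(* Cells are 'I_n, read as Z_n; a configuration is sigma : 'I_n -> bool
   (false = 0, true = 1).  [cellv sigma k] is the value of the cell k mod n,
   for an integer k (needs 0 < n to be meaningful). *)
Definition cellv (n : nat) (sigma : 'I_n -> bool) (k : int) : bool :=
  if insub (absz (k %% n%:Z)%Z) is Some j then sigma j else false.

Definition window_count (n r : nat) (sigma : 'I_n -> bool) (i : 'I_n) (b : bool) : nat :=
  (\sum_(0 <= t < (2 * r).+1) ((cellv sigma (i%:Z + t%:Z - r%:Z)) == b))%N.

Definition maj (n r : nat) (sigma : 'I_n -> bool) : 'I_n -> bool :=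
  fun i => ~~ (window_count r sigma i true < window_count r sigma i false)%N.

Definition temporally_periodic_pair (n r : nat) (sigma sigma' : 'I_n -> bool) : Prop :=
  (forall i, maj r sigma i = sigma' i) /\ (forall i, maj r sigma' i = sigma i).

Definition is_block (n : nat) (sigma : 'I_n -> bool) (beta : bool) (i j : 'I_n) : bool :=
  [forall t : 'I_n, (t <= absz ((j%:Z - i%:Z) %% n%:Z)%Z)%N ==> (cellv sigma (i%:Z + t%:Z) == beta)]
  && (cellv sigma (i%:Z - 1) == ~~ beta) && (cellv sigma (j%:Z + 1) == ~~ beta).

(* B^beta(sigma) and B(sigma) = B^0(sigma) u B^1(sigma), intervals as (start, end) pairs *)
Definition Bbeta (n : nat) (sigma : 'I_n -> bool) (beta : bool) : {set 'I_n * 'I_n} :=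
  [set p | is_block sigma beta p.1 p.2].

Definition B (n : nat) (sigma : 'I_n -> bool) : {set 'I_n * 'I_n} :=
  Bbeta sigma false :|: Bbeta sigma true.

From mathcomp Require Import all_boot all_order all_algebra.
From mathcomp Require Import zify.
Import Order.TTheory GRing.Theory Num.Theory.

(* The blocks of a configuration are in bijection with their last cells, i.e.
   with the positions k where sigma(k) <> sigma(k+1); so |B(sigma)| is the
   number of value changes around the ring.  When the window of maj_r slides
   from k to k+1 its number of ones changes by at most one, so maj_r(sigma)
   can only change value at k when it takes the value sigma(k+r+1) of the cell
   entering the window.  A telescoping count then shows that maj_r never
   increases the number of changes; applied in both directions of a
   temporally periodic pair this gives equality. *)

Set Implicit Arguments. Unset Strict Implicit. Unset Printing Implicit Defensive.
Local Open Scope ring_scope.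

Section Cells.
Variables (n : nat) (s : 'I_n -> bool).

Lemma cellv_congr (a b : int) : (a %% n)%Z = (b %% n)%Z -> cellv s a = cellv s b.
Proof. by rewrite /cellv => ->. Qed.

Lemma cellvDn (k : int) : cellv s (k + n%:Z) = cellv s k.
Proof. by apply: cellv_congr; rewrite modzDr. Qed.

Lemma cellv_shift (a b : int) :
  a = b \/ a = b + n%:Z \/ a = b - n%:Z -> cellv s a = cellv s b.
Proof. by case=> [|[|]] ->; rewrite ?cellvDn -?(cellvDn (b - n%:Z)) ?subrK. Qed.

Lemma cellvP (n_gt0 : (0 < n)%N) (k : int) :
  exists2 j : 'I_n, cellv s k = s j & j%:Z = (k %% n)%Z.
Proof.
have k_ge0 : 0 <= (k %% n)%Z by rewrite modz_ge0 // eqz_nat -lt0n.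
rewrite /cellv; case: insubP => [j _ jE | ]; first by exists j; rewrite // jE gez0_abs.
by rewrite -ltz_nat gez0_abs // ltz_pmod.
Qed.

End Cells.

Lemma cellv_ext n (s t : 'I_n -> bool) : s =1 t -> cellv s =1 cellv t.
Proof. by move=> st k; rewrite /cellv; case: insub. Qed.

Section PeriodicSums.
Variable n : nat.
Hypothesis n_gt0 : (0 < n)%N.

Lemma big_nat_shift1_periodic (R : Type) (idx : R) (op : Monoid.com_law idx)
    (g : int -> R) :
  (forall k, g (k + n%:Z) = g k) ->
  \big[op/idx]_(0 <= k < n) g (k%:Z + 1) = \big[op/idx]_(0 <= k < n) g k%:Z.
Proof.
case: n n_gt0 => // m _ gP; rewrite big_nat_recr // big_nat_recl // (Monoid.mulmC op).
have -> : g (m%:Z + 1) = g 0 by rewrite -(gP 0); congr g; lia.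
by congr (op _ _); apply: eq_bigr => k _; congr g; lia.
Qed.

Definition changes (f : int -> bool) : nat :=
  (\sum_(0 <= k < n) (f k%:Z != f (k%:Z + 1)%R))%N.

Variable f : int -> bool.
Hypothesis f_periodic : forall k, f (k + n%:Z) = f k.

Lemma changes_shift (m : nat) : changes (fun k => f (k + m%:Z)) = changes f.
Proof.
elim: m => [|m IH]; first by apply: eq_bigr => k _; rewrite !addr0.
pose g k := nat_of_bool (f (k + m%:Z) != f (k + 1 + m%:Z)).
rewrite -IH /changes -(big_nat_shift1_periodic addn (g := g)).
  by apply: eq_bigr => k _; congr (f _ != f _); lia.
move=> k; rewrite /g -[in RHS]f_periodic -[in RHS](f_periodic (k + 1 + m%:Z)).
by congr (f _ != f _); lia.
Qed.

(* If [w] always takes the value [f] is about to switch to, then every switch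
   of [f] is paid for by a switch of [w] or by a disagreement [f (k + 1) != w k],
   and disagreements telescope away over a period. *)
Lemma changes_le_follower (w : int -> bool) :
  (forall k, w (k + n%:Z) = w k) ->
  (forall k, f k != f (k + 1) -> w k = f (k + 1)) ->
  (changes f <= changes w)%N.
Proof.
move=> w_periodic w_follows.
pose miss k := nat_of_bool (f (k + 1) != w k).
have changes_f :
    changes f = (\sum_(0 <= k < n) (f (k%:Z + 1)%R != f (k%:Z + 1 + 1)%R))%N.
  pose g k := nat_of_bool (f k != f (k + 1)).
  rewrite /changes -(big_nat_shift1_periodic addn (g := g)) //.
  by move=> k; rewrite /g f_periodic -[in RHS](f_periodic (k + 1)); congr (f _ != f _); lia.
have miss_shift : (\sum_(0 <= k < n) miss (k%:Z + 1)%R = \sum_(0 <= k < n) miss k%:Z)%N.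
  apply: big_nat_shift1_periodic => k; rewrite /miss w_periodic -[in RHS](f_periodic (k + 1)).
  by congr (f _ != _); lia.
have step k :
    ((f (k + 1)%R != f (k + 1 + 1)%R) + miss (k + 1)%R <= (w k != w (k + 1)%R) + miss k)%N.
  rewrite /miss; have := w_follows (k + 1).
  by case: (f (k + 1)); case: (f (k + 1 + 1)); case: (w k); case: (w (k + 1)) => // /(_ isT).
rewrite changes_f -(leq_add2r (\sum_(0 <= k < n) miss k%:Z)).
rewrite -[in X in (X <= _)%N]miss_shift -!big_split /=.
by apply: leq_sum => k _; exact: step.
Qed.

End PeriodicSums.

Section Blocks.
Variables (n : nat) (s : 'I_n -> bool).

Definition cdist (i j : 'I_n) : nat := absz ((j%:Z - i%:Z) %% n%:Z)%Z.

Lemma cdistE (i j : 'I_n) : cdist i j = if (i <= j)%N then (j - i)%N else (j + n - i)%N.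
Proof.
have := ltn_ord i; have := ltn_ord j => j_lt i_lt.
have mod_ge0 : 0 <= ((j%:Z - i%:Z) %% n%:Z)%Z by rewrite modz_ge0 // eqz_nat -lt0n; lia.
apply/eqP; rewrite -eqz_nat gez0_abs //.
case: (leqP i j) => ij; apply/eqP; first by rewrite modz_small; lia.
by rewrite -modzDr modz_small; lia.
Qed.

Lemma cdist_lt (i j : 'I_n) : (cdist i j < n)%N.
Proof. by rewrite cdistE; case: (leqP i j); have := ltn_ord i; have := ltn_ord j; lia. Qed.

Lemma is_blockP b (i j : 'I_n) :
  reflect [/\ forall t, (t <= cdist i j)%N -> cellv s (i%:Z + t%:Z) = b,
              cellv s (i%:Z - 1) = ~~ b & cellv s (j%:Z + 1) = ~~ b]
          (is_block s b i j).
Proof.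
apply: (iffP idP) => [|[inside before after]].
  case/andP=> /andP[/forallP inside /eqP before] /eqP after.
  split=> // t t_le; have t_lt := leq_ltn_trans t_le (cdist_lt i j).
  by apply/eqP; have /implyP := inside (Ordinal t_lt); apply.
by rewrite /is_block before after !eqxx !andbT; apply/forallP => t; apply/implyP => /inside ->.
Qed.

Lemma block_last b (i j : 'I_n) : is_block s b i j -> cellv s j%:Z = b.
Proof.
case/is_blockP => inside _ _; rewrite -(inside (cdist i j)) //.
by apply: cellv_shift; rewrite cdistE; case: (leqP i j); have := ltn_ord i; lia.
Qed.

Lemma block_last_boundary b (i j : 'I_n) :
  is_block s b i j -> cellv s j%:Z != cellv s (j%:Z + 1).
Proof. by move=> blk; rewrite (block_last blk); case/is_blockP: blk => _ _ ->; case: b. Qed.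

(* A longer block ending at [j] would contain the cell just before the shorter one. *)
Lemma block_cdist_le b (i i' j : 'I_n) :
  is_block s b i j -> is_block s b i' j -> (cdist i' j <= cdist i j)%N.
Proof.
case/is_blockP => _ before _ /is_blockP[inside' _ _]; rewrite leqNgt; apply/negP => lt.
set t := (cdist i' j - cdist i j - 1)%N.
have cell_t : cellv s (i'%:Z + t%:Z) = cellv s (i%:Z - 1).
  apply: cellv_shift; move: lt; rewrite /t !cdistE.
  have := ltn_ord i; have := ltn_ord i'; have := ltn_ord j.
  by case: (leqP i j); case: (leqP i' j); lia.
by have := inside' t (leq_trans (leq_subr _ _) (leq_subr _ _)); rewrite cell_t before; case: (b).
Qed.

Lemma block_first_unique b b' (i i' j : 'I_n) :
  is_block s b i j -> is_block s b' i' j -> i = i'.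
Proof.
move=> blk blk'; have bb' : b' = b by rewrite -(block_last blk) -(block_last blk').
rewrite {}bb' in blk'; have := block_cdist_le blk blk'; have := block_cdist_le blk' blk.
rewrite !cdistE => le1 le2; apply: val_inj => /=.
move: le1 le2; have := ltn_ord i; have := ltn_ord i'; have := ltn_ord j.
by case: (leqP i j); case: (leqP i' j); lia.
Qed.

Lemma block_at_boundary (j : 'I_n) :
  cellv s j%:Z != cellv s (j%:Z + 1) -> exists i, is_block s (cellv s j%:Z) i j.
Proof.
set b := cellv s j%:Z => boundary; have j_lt := ltn_ord j.
pose other d := cellv s (j%:Z - d%:Z) != b.
have other_wrap : other n.-1.
  by rewrite /other (_ : cellv _ _ = cellv s (j%:Z + 1)) 1?eq_sym //; apply: cellv_shift; lia.
have [d other_d d_min] := ex_minnP (ex_intro other _ other_wrap).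
have d_gt0 : (0 < d)%N by case: d other_d {d_min} => //; rewrite /other subr0 eqxx.
have d_lt := d_min _ other_wrap.
have [i i_lt i_def] :
    exists2 i, (i < n)%N & i%:Z = j%:Z + 1 - d%:Z \/ i%:Z = j%:Z + 1 - d%:Z + n%:Z.
  by case: (leqP d j.+1) => ?; [exists (j.+1 - d)%N | exists (j.+1 + n - d)%N]; lia.
have cdist_i : cdist (Ordinal i_lt) j = d.-1 by rewrite cdistE /=; case: leqP; lia.
exists (Ordinal i_lt); apply/is_blockP; split.
- rewrite cdist_i => t t_le; have : ~~ other (d.-1 - t)%N by apply/negP => /d_min; lia.
  by rewrite /other negbK => /eqP <-; apply: cellv_shift => /=; lia.
- rewrite (_ : cellv _ _ = cellv s (j%:Z - d%:Z)); last by apply: cellv_shift => /=; lia.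
  by move: other_d; rewrite /other; case: cellv; case: (b).
- by move: boundary; case: cellv; case: (b).
Qed.

End Blocks.

Lemma card_B n (s : 'I_n -> bool) : #|B s| = changes n (cellv s).
Proof.
pose boundary := [set j : 'I_n | cellv s j%:Z != cellv s (j%:Z + 1)].
have -> : changes n (cellv s) = #|boundary|.
  rewrite /changes big_mkord -sum1_card.
  by rewrite [RHS]big_mkcond; apply: eq_bigr => j _; rewrite inE; case: (_ != _).
have B_ends : snd @: B s = boundary.
  apply/setP => j; rewrite inE; apply/imsetP/idP => [[[i j'] blk ->] | /block_at_boundary [i blk]].
    by rewrite !inE in blk; case/orP: blk => /block_last_boundary.
  by exists (i, j); rewrite // !inE; case: cellv blk => ->; rewrite ?orbT.
rewrite -B_ends; apply/esym/card_in_imset => -[i j] [i' j'] /=.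
rewrite !inE /= => blk blk' jj'; move: blk'; rewrite -{}jj' => blk'; congr pair.
by case/orP: blk => blk; case/orP: blk' => /(block_first_unique blk).
Qed.

Section Majority.
Variables (n r : nat) (s : 'I_n -> bool).

Definition window_ones (k : int) : nat :=
  (\sum_(0 <= t < (2 * r).+1) cellv s (k + t%:Z - r%:Z))%N.

Lemma window_count_total (i : 'I_n) :
  (window_count r s i true + window_count r s i false)%N = (2 * r).+1.
Proof.
rewrite /window_count -big_split /= -[RHS]subn0 -[RHS]muln1 -sum_nat_const_nat.
by apply: eq_bigr => t _; case: cellv.
Qed.

Lemma cellv_maj (n_gt0 : (0 < n)%N) (k : int) :
  cellv (maj r s) k = (r < window_ones k)%N.
Proof.
have [i -> iE] := cellvP (maj r s) n_gt0 k.
have ones_i : window_count r s i true = window_ones k.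
  apply: eq_bigr => t _; rewrite eqb_id; congr nat_of_bool.
  by apply: cellv_congr; rewrite -!addrA iE modzDml.
rewrite /maj -ones_i; have := window_count_total i.
by move=> total; apply/idP/idP; lia.
Qed.

Lemma window_ones_step (k : int) :
  (window_ones (k + 1) + cellv s (k - r%:Z) = window_ones k + cellv s (k + r%:Z + 1))%N.
Proof.
pose c t := nat_of_bool (cellv s (k + t%:Z - r%:Z)).
have -> : window_ones (k + 1) = (\sum_(0 <= t < (2 * r).+1) c t.+1)%N.
  by apply: eq_bigr => t _; rewrite /c; congr (nat_of_bool (cellv s _)); lia.
have first_cell : c 0%N = cellv s (k - r%:Z) by rewrite /c; congr (nat_of_bool (cellv s _)); lia.
have last_cell : c (2 * r).+1 = cellv s (k + r%:Z + 1).
  by rewrite /c; congr (nat_of_bool (cellv s _)); lia.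
by rewrite -first_cell -last_cell addnC -big_nat_recl // big_nat_recr.
Qed.

(* Crossing the threshold [r] forces the entering and leaving cells to differ,
   and the entering cell gives the direction of the crossing. *)
Lemma maj_switch (n_gt0 : (0 < n)%N) (k : int) :
  cellv (maj r s) k != cellv (maj r s) (k + 1) ->
  cellv (maj r s) (k + 1) = cellv s (k + r%:Z + 1).
Proof.
rewrite !cellv_maj //; have := window_ones_step k.
by case: (cellv s (k - r%:Z)); case: (cellv s (k + r%:Z + 1)); case: ltnP; case: ltnP; lia.
Qed.

End Majority.

Lemma changes_maj_le n r (s s' : 'I_n -> bool) :
  (0 < n)%N -> maj r s =1 s' -> (changes n (cellv s') <= changes n (cellv s))%N.
Proof.
move=> n_gt0 s_to_s'.
rewrite -(changes_shift n_gt0 (cellvDn s) r.+1).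
have -> : changes n (cellv s') = changes n (cellv (maj r s)).
  by apply: eq_bigr => k _; rewrite !(cellv_ext s_to_s').
apply: changes_le_follower => // [k | k | k /(maj_switch n_gt0) ->].
- exact: cellvDn.
- by apply: cellv_shift; lia.
- by congr cellv; lia.
Qed.

Unset Implicit Arguments.

Theorem claim16 (r n : nat) (hr : (1 <= r)%N) (hn : (0 < n)%N)
  (sigma sigma' : 'I_n -> bool) :
  temporally_periodic_pair r sigma sigma' ->
  #|B sigma| = #|B sigma'|.
Proof.
case=> maj_sigma maj_sigma'; rewrite !card_B; apply/eqP.
by rewrite eqn_leq (changes_maj_le hn maj_sigma) (changes_maj_le hn maj_sigma').
Qed.
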